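(* Let $p \in (0,1)$. Define a sequence $\{X_i\}_{i\ge1}$ of $\{0,1\}$-valued random variables as follows: $X_1 = 1$ with probability one, and for each $n = 1,2,\dots$, let $U_n$ be uniformly distributed on $\{1,\dots,n\}$ (chosen independently of everything else) and set $X_{n+1} = X_{U_n}$ with probability $p$ and $X_{n+1} = 0$ with probability $1-p$ (all choices made independently). Let $H_n := \sum_{i=1}^n X_i$. For $k = 1,2,\dots$ and $n = 1,2,\dots$ let $$a_n^{(k)} := \frac{\Gamma(n+kp)}{\Gamma(n)\Gamma(1+kp)}.$$ Then for every $k = 1,2,\dots$ and every $n = 1,2,\dots$, $$E[(H_n)_k] = k! \sum_{i=1}^k (-1)^{k-i}\binom{k-1}{i-1} a_n^{(i)},$$ where $(x)_k := x(x-1)\cdots(x-k+1)$ denotes the falling factorial (with $(x)_1 = x$).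
   Context: This is the ''laziest'' minimal random walk model of elephant type (parameter $q=0$, initial step $X_1=1$). Equivalently, the conditional law of $X_{n+1}$ given $X_1,\dots,X_n$ is $P(X_{n+1}=1\mid X_1,\dots,X_n) = p H_n/n$. *)

From HB Require Import structures.
From mathcomp Require Import all_boot all_order all_algebra.
From mathcomp Require Import all_classical all_reals all_analysis.
Set Implicit Arguments. Unset Strict Implicit. Unset Printing Implicit Defensive.
Import Order.TTheory GRing.Theory Num.Theory.
Local Open Scope ring_scope.
Local Open Scope classical_set_scope.

(* Euler's Gamma function: Gamma x = int_0^oo t^(x-1) e^(-t) dt
   (used only for x > 0, where the integral converges). *)
Definition Gamma (R : realType) (x : R) : R :=
  Rintegral (@lebesgue_measure R) `[0%R, +oo[%classic
    (fun t : R => t `^ (x - 1) * expR (- t)).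

Definition a_coef (R : realType) (p : R) (k n : nat) : R :=
  Gamma (n%:R + k%:R * p) / (Gamma n%:R * Gamma (1 + k%:R * p)).

(* A state is the history xs = [:: X_1; ...; X_m].
   One step: U_m uniform on {1,...,m} (index u : 'I_m, 0-based) and,
   independently, a coin B_m with P(B_m = true) = p; then
   X_{m+1} = X_{U_m} if B_m, and X_{m+1} = 0 otherwise.
   [lerw_expect p j f xs] is the expectation of f(X_1,...,X_{m+j}) given
   the history xs (i.e. the sum over all choices of the j next
   (U, B) pairs, weighted by their product probabilities). *)
Fixpoint lerw_expect (R : realType) (p : R) (j : nat)
    (f : seq bool -> R) (xs : seq bool) : R :=
  match j with
  | 0 => f xs
  | j'.+1 =>
      let m := size xs in
      \sum_(u < m) (p * (m%:R)^-1) *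
          lerw_expect p j' f (rcons xs (nth false xs u))
      + (1 - p) * lerw_expect p j' f (rcons xs false)
  end.

(* E[f(X_1,...,X_n)] with X_1 = 1 almost surely (n >= 1). *)
Definition lerw_E (R : realType) (p : R) (n : nat) (f : seq bool -> R) : R :=
  lerw_expect p n.-1 f [:: true].

Definition H_of (xs : seq bool) : nat := count id xs.

Definition falling (R : realType) (x : R) (k : nat) : R :=
  \prod_(i < k) (x - i%:R).

From HB Require Import structures.
From mathcomp Require Import all_boot all_order all_algebra.
From mathcomp Require Import all_classical all_reals all_analysis.
From mathcomp Require Import ring measurable_realfun.
Set Implicit Arguments. Unset Strict Implicit. Unset Printing Implicit Defensive.
Import numFieldNormedType.Exports.
Import Order.TTheory GRing.Theory Num.Theory.
Local Open Scope classical_set_scope.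
Local Open Scope ring_scope.

(* Given X_1, ..., X_m, the next step is 1 with probability p H_m / m, and
   (h + 1)_k - (h)_k = k (h)_(k-1).  Hence F_k(n) := E[(H_n)_k] satisfies
     F_k(n + 1) = (1 + k p / n) F_k(n) + k (k - 1) p / n F_(k-1)(n),
     F_k(1) = [k = 1].
   The right-hand side satisfies the same recursion and initial values:
   Gamma(x + 1) = x Gamma(x) gives a_(n+1)^(i) = (1 + i p / n) a_n^(i) and
   a_1^(i) = 1, the absorption identity (k - i) C(k, i) = k C(k - 1, i)
   produces the second term, and sum_i (-1)^(k-i) C(k, i) = [k = 0].
   The functional equation of Gamma comes from the fundamental theorem of
   calculus for s^(r+1) e^(-s) on [0, r + 1] and on [r + 1, +oo[, where its
   derivative (r + 1 - s) s^r e^(-s) has constant sign. *)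

Section LerwExpect.
Variables (R : realType) (p : R).

Definition lerw_step (f : seq bool -> R) (xs : seq bool) : R :=
  let m := size xs in
  \sum_(u < m) (p * (m%:R)^-1) * f (rcons xs (nth false xs u))
  + (1 - p) * f (rcons xs false).

Lemma lerw_expectS j f xs :
  lerw_expect p j.+1 f xs = lerw_step (lerw_expect p j f) xs.
Proof. by []. Qed.

Lemma lerw_expectSr j f xs :
  lerw_expect p j.+1 f xs = lerw_expect p j (lerw_step f) xs.
Proof.
elim: j xs => [//|j IHj] xs.
rewrite lerw_expectS [RHS]lerw_expectS /lerw_step IHj.
by congr (_ + _); apply: eq_bigr => u _; rewrite IHj.
Qed.

Lemma eq_lerw_expect j f g xs :
  (forall ys, size ys = (size xs + j)%N -> f ys = g ys) ->
  lerw_expect p j f xs = lerw_expect p j g xs.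
Proof.
elim: j xs => [|j IHj] xs efg; first by apply: efg; rewrite addn0.
have efg' b : forall ys, size ys = (size (rcons xs b) + j)%N -> f ys = g ys.
  by move=> ys; rewrite size_rcons addSnnS; apply: efg.
rewrite !lerw_expectS /lerw_step (IHj _ (efg' false)).
by congr (_ + _); apply: eq_bigr => u _; rewrite (IHj _ (efg' _)).
Qed.

Lemma lerw_expect_lin j a b f g xs :
  lerw_expect p j (fun ys => a * f ys + b * g ys) xs =
  a * lerw_expect p j f xs + b * lerw_expect p j g xs.
Proof.
elim: j xs => [//|j IHj] xs.
rewrite !lerw_expectS /lerw_step IHj.
under eq_bigr => u _ do rewrite IHj mulrDr mulrCA [X in _ + X]mulrCA.
rewrite big_split /= -!mulr_sumr; ring.
Qed.

Lemma sum_nth_bool (F : bool -> R) (xs : seq bool) :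
  \sum_(u < size xs) F (nth false xs u) =
  (count id xs)%:R * F true + (count negb xs)%:R * F false.
Proof.
rewrite -(big_mkord xpredT (F \o nth false xs)) -(big_nth false xpredT F).
elim: xs => [|x xs IHxs]; first by rewrite big_nil !mul0r addr0.
by rewrite big_cons IHxs; case: x; rewrite /= ?add0n natrD; ring.
Qed.

Lemma H_of_rcons xs b : H_of (rcons xs b) = (H_of xs + b)%N.
Proof. by rewrite /H_of -cats1 count_cat /= addn0. Qed.

Lemma fallingSl (x : R) k : falling x k.+1 = x * falling (x - 1) k.
Proof.
rewrite /falling big_ord_recl subr0; congr (_ * _).
by apply: eq_bigr => i _; rewrite /bump /= natrD opprD addrA.
Qed.

Lemma fallingSr (x : R) k : falling x k.+1 = falling x k * (x - k%:R).
Proof. by rewrite /falling big_ord_recr. Qed.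

Lemma lerw_step_falling k xs : (0 < size xs)%N ->
  lerw_step (fun ys => falling (H_of ys)%:R k.+1) xs =
  (1 + p * k.+1%:R / (size xs)%:R) * falling (H_of xs)%:R k.+1
  + p * k.+1%:R * k%:R / (size xs)%:R * falling (H_of xs)%:R k.
Proof.
move=> xs_gt0; rewrite /lerw_step.
under eq_bigr => u _ do rewrite H_of_rcons.
rewrite -mulr_sumr (sum_nth_bool (fun b => falling (H_of xs + b)%N%:R k.+1)).
rewrite H_of_rcons !addn0 addn1 -[count id xs]/(H_of xs).
have -> : (count negb xs)%:R = (size xs)%:R - (H_of xs)%:R :> R.
  by rewrite -(count_predC id xs) natrD addrC addKr.
have m_neq0 : (size xs)%:R != 0 :> R by rewrite pnatr_eq0 -lt0n.
rewrite fallingSl -natr1 addrK !(fallingSr (H_of xs)%:R k).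
by field.
Qed.

Definition falling_moment k n := lerw_E p n (fun xs => falling (H_of xs)%:R k).

Lemma falling_moment1 k : falling_moment k.+1 1 = (k == 0)%:R.
Proof.
rewrite /falling_moment /lerw_E /= fallingSl subrr mul1r.
by case: k => [|k]; rewrite ?fallingSl ?mul0r // /falling big_ord0.
Qed.

Lemma falling_momentS k n : (0 < n)%N ->
  falling_moment k.+1 n.+1 =
  (1 + p * k.+1%:R / n%:R) * falling_moment k.+1 n
  + p * k.+1%:R * k%:R / n%:R * falling_moment k n.
Proof.
case: n => [//|n] _; rewrite /falling_moment /lerw_E -[n.+2.-1]/n.+1 lerw_expectSr.
rewrite -lerw_expect_lin; apply: eq_lerw_expect => ys /= size_ys.
by rewrite lerw_step_falling size_ys.
Qed.

End LerwExpect.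

Section MomentFormula.
Variables (R : realType) (p : R) (a : nat -> nat -> R).

Definition moment_formula k n : R :=
  (k`!)%:R * \sum_(1 <= i < k.+1)
    (-1) ^+ (k - i) * ('C(k.-1, i.-1))%:R * a i n.

Lemma moment_formula_ord k n : moment_formula k.+1 n =
  (k.+1`!)%:R * \sum_(i < k.+1) (-1) ^+ (k - i) * ('C(k, i))%:R * a i.+1 n.
Proof. by rewrite /moment_formula big_add1 big_mkord. Qed.

Lemma moment_formula0 n : moment_formula 0 n = 0.
Proof. by rewrite /moment_formula big_geq // mulr0. Qed.

Lemma sum_alt_binomial k :
  \sum_(i < k.+1) (-1) ^+ (k - i) * ('C(k, i))%:R = (k == 0)%:R :> R.
Proof.
have -> : \sum_(i < k.+1) (-1) ^+ (k - i) * ('C(k, i))%:R = (-1 + 1) ^+ k :> R.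
  by rewrite exprDn; apply: eq_bigr => i _; rewrite expr1n mulr1 mulr_natr.
by rewrite addNr expr0n.
Qed.

Lemma sum_alt_binomial_absorb k (b : nat -> R) :
  \sum_(i < k.+2) (-1) ^+ (k.+1 - i) * ('C(k.+1, i))%:R * (i%:R - k.+1%:R) * b i
  = k.+1%:R * \sum_(i < k.+1) (-1) ^+ (k - i) * ('C(k, i))%:R * b i.
Proof.
rewrite big_ord_recr /= subrr mulr0 mul0r addr0 mulr_sumr.
apply: eq_bigr => i _; have le_ik : (i <= k)%N by rewrite -ltnS.
have absorb : ('C(k.+1, i))%:R * (i%:R - k.+1%:R) = - (k.+1%:R * ('C(k, i))%:R) :> R.
  by rewrite -natrM [(k.+1 * _)%N](mul_bin_down k.+1 i) natrM natrB ?leqW //; ring.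
by rewrite subSn // exprS -[_ * _ * (_ - _)]mulrA absorb; ring.
Qed.

Hypothesis a_at1 : forall i, a i.+1 1 = 1.
Hypothesis a_succ : forall i n, (0 < n)%N -> a i n.+1 = (1 + i%:R * p / n%:R) * a i n.

Lemma moment_formula1 k : moment_formula k.+1 1 = (k == 0)%:R.
Proof.
rewrite moment_formula_ord.
under eq_bigr => i _ do rewrite a_at1 mulr1.
by rewrite sum_alt_binomial; case: k => [|k]; rewrite ?mulr0 // mulr1.
Qed.

Lemma moment_formulaS k n : (0 < n)%N ->
  moment_formula k.+1 n.+1 =
  (1 + p * k.+1%:R / n%:R) * moment_formula k.+1 n
  + p * k.+1%:R * k%:R / n%:R * moment_formula k n.
Proof.
move=> n_gt0.
have split_a : \sum_(i < k.+1) (-1) ^+ (k - i) * ('C(k, i))%:R * a i.+1 n.+1 =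
    (1 + p * k.+1%:R / n%:R) *
      \sum_(i < k.+1) (-1) ^+ (k - i) * ('C(k, i))%:R * a i.+1 n
    + p / n%:R *
      \sum_(i < k.+1) (-1) ^+ (k - i) * ('C(k, i))%:R * (i%:R - k%:R) * a i.+1 n.
  rewrite !mulr_sumr -big_split /=; apply: eq_bigr => i _.
  by rewrite a_succ // -!natr1; ring.
rewrite !moment_formula_ord split_a.
case: k split_a => [|k] _; first by rewrite moment_formula0 !big_ord1 /=; ring.
rewrite (sum_alt_binomial_absorb k (fun i => a i.+1 n)) moment_formula_ord.
rewrite [in RHS]factS natrM; ring.
Qed.

End MomentFormula.

Lemma falling_moment_eq_formula (R : realType) (p : R) (a : nat -> nat -> R) :
  (forall i, a i.+1 1 = 1) ->
  (forall i n, (0 < n)%N -> a i n.+1 = (1 + i%:R * p / n%:R) * a i n) ->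
  forall k n, (0 < n)%N -> falling_moment p k.+1 n = moment_formula a k.+1 n.
Proof.
move=> a_at1 a_succ k n; elim: n k => [//|n IHn] k _.
case: n IHn => [|n] IHn; first by rewrite falling_moment1 (moment_formula1 a_at1).
rewrite falling_momentS // (moment_formulaS a_succ) // IHn //.
by case: k => [|k]; rewrite ?moment_formula0 ?mulr0 ?mul0r // IHn.
Qed.

Lemma exists_natr_ge (R : archiFieldType) (r : R) : exists m : nat, r <= m%:R.
Proof.
exists (Num.Def.archi_bound `|r|); rewrite (le_trans (ler_norm r)) //.
exact/ltW/archi_boundP.
Qed.

Lemma ge0_integral_subr d (T : measurableType d) (R : realType)
    (mu : {measure set T -> \bar R}) (D : set T) (f g : T -> R) :
  measurable D -> measurable_fun D f -> measurable_fun D g ->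
  (forall x, D x -> 0 <= g x) -> (forall x, D x -> g x <= f x) ->
  (\int[mu]_(x in D) (f x)%:E =
   \int[mu]_(x in D) (g x)%:E + \int[mu]_(x in D) (f x - g x)%:E)%E.
Proof.
move=> mD mf mg g_ge0 g_le_f.
rewrite -ge0_integralD //.
- by apply: eq_integral => x _; rewrite -EFinD addrC subrK.
- exact/measurable_EFinP.
- by move=> x Dx; rewrite lee_fin subr_ge0 g_le_f.
- exact/measurable_EFinP/measurable_funB.
Qed.

Lemma ge0_integral_itvy_split (R : realType) (a c : R) (f : R -> \bar R) :
  a < c -> measurable_fun `[a, +oo[ f -> (forall s, a <= s -> (0 <= f s)%E) ->
  (\int[lebesgue_measure]_(s in `[a, +oo[) f s =
   \int[lebesgue_measure]_(s in `[a, c]) f s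
   + \int[lebesgue_measure]_(s in `[c, +oo[) f s)%E.
Proof.
move=> a_lt_c mf f_ge0.
rewrite (@itv_bndbnd_setU _ _ (BLeft a) (BRight c) +oo%O) ?bnd_simp ?ltW //.
rewrite ge0_integral_setU //=.
- rewrite integral_itv_obnd_cbnd //; apply: measurable_funS mf => //.
  by apply: subset_itvr; rewrite bnd_simp ltW.
- by rewrite -itv_bndbnd_setU // bnd_simp ltW.
- move=> s [|]; rewrite in_itv /= => /andP[+ _]; first exact: f_ge0.
  by move=> /(lt_trans a_lt_c)/ltW; exact: f_ge0.
- apply/disj_setPS => s [] /=; rewrite !in_itv /= => /andP[_ s_le_c] /andP[c_lt_s _].
  by move: (le_lt_trans s_le_c c_lt_s); rewrite ltxx.
Qed.

Section GammaFunction.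
Variable R : realType.
Notation mu := (@lebesgue_measure R).

Definition gammaf (r s : R) : R := s `^ r * expR (- s).

Definition egamma (r : R) : \bar R := \int[mu]_(s in `[0, +oo[) (gammaf r s)%:E.

Lemma GammaE (x : R) : Gamma x = fine (egamma (x - 1)).
Proof. by []. Qed.

Lemma gammaf_ge0 r s : 0 <= gammaf r s.
Proof. by rewrite mulr_ge0 ?powR_ge0 ?expR_ge0. Qed.

Lemma gammaf_succ r s : 0 <= r -> 0 <= s -> gammaf (r + 1) s = s * gammaf r s.
Proof.
move=> r_ge0 s_ge0; rewrite /gammaf powRD ?powRr1 1?mulrCA ?mulrA //.
by rewrite implybE gt_eqF ?orbT // ltr_wpDl.
Qed.

Lemma measurable_gammaf r (D : set R) : measurable_fun D (gammaf r).
Proof.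
apply: (measurable_funS (E := setT)) => //.
apply: measurable_funM; first exact: measurable_powR.
by apply: measurableT_comp; [exact: measurable_expR | exact: oppr_measurable].
Qed.

Lemma continuous_expRN : continuous (fun s : R => expR (- s)).
Proof. by move=> t; apply: continuous_comp; [exact: continuousN | exact: continuous_expR]. Qed.

Lemma continuous_gammaf (r t : R) : 0 < t -> {for t, continuous (gammaf r)}.
Proof.
move=> t_gt0; apply: continuousM; last exact: continuous_expRN.
apply/differentiable_continuous/derivable1_diffP/derivable_powR.
by rewrite in_itv /= t_gt0.
Qed.

Lemma gammaf_cvg0 (r : R) : 0 <= r -> gammaf r @ 0^'+ --> gammaf r 0.
Proof.
move=> r_ge0; apply: cvgM; last exact/cvg_at_right_filter/continuous_expRN.
move: r_ge0; rewrite le_eqVlt => /predU1P[<-|r_gt0].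
  by rewrite powRr0; under eq_fun do rewrite powRr0; exact: cvg_cst.
by rewrite powR0 ?gt_eqF //; exact: powR_cvg0.
Qed.

Lemma is_derive_gammaf (r t : R) : 0 < t ->
  is_derive t 1 (gammaf (r + 1)) ((r + 1) * gammaf r t - gammaf (r + 1) t).
Proof.
move=> t_gt0.
have dpow : is_derive t 1 (fun s : R => s `^ (r + 1)) ((r + 1) * t `^ r).
  by rewrite -[in X in _ * t `^ X](addrK 1 r); exact: is_derive1_powR.
have dexp : is_derive t 1 (fun s : R => expR (- s)) (expR (- t) * -1).
  exact: (is_derive1_comp (f := expR) (g := -%R)).
have -> : (r + 1) * gammaf r t - gammaf (r + 1) t =
    t `^ (r + 1) * (expR (- t) * -1) + expR (- t) * ((r + 1) * t `^ r).
  by rewrite /gammaf; ring.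
exact: is_deriveM dpow dexp.
Qed.

Lemma gammaf_le_inv (r s : R) m : 1 <= s -> r <= m%:R ->
  gammaf r s <= (m.+1`!)%:R / s.
Proof.
move=> s_ge1 r_le_m; have s_gt0 : 0 < s := lt_le_trans ltr01 s_ge1.
set C : R := (m.+1`!)%:R; have C_gt0 : 0 < C by rewrite ltr0n fact_gt0.
have pow_le : s `^ r <= s ^+ m by rewrite -powR_mulrn ?ler_powR // ltW.
have exp_ge : s ^+ m.+1 / C <= expR s.
  by apply: le_trans (expR_ge1Dxn m (ltW s_gt0)); rewrite lerDr.
have -> : C / s = s ^+ m * (s ^+ m.+1 / C)^-1.
  by rewrite exprS; field; rewrite expf_neq0 ?gt_eqF.
rewrite /gammaf expRN; apply: ler_pM; rewrite ?powR_ge0 ?invr_ge0 ?expR_ge0 //.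
by rewrite lef_pV2 ?posrE ?expR_gt0 ?divr_gt0 ?exprn_gt0.
Qed.

Lemma gammaf_cvgy (r : R) : gammaf r @ +oo --> 0.
Proof.
have [m r_le_m] := exists_natr_ge r.
set C : R := (m.+1`!)%:R.
have inv_cvg0 : (fun s : R => s^-1) @ +oo --> 0.
  have pos : \forall s \near +oo, 0 < (fun s : R => s) s.
    by apply: nbhs_pinfty_gt; rewrite real0.
  exact: ((gtr0_cvgV0 pos).2 cvg_id).
have : (fun s => C * s^-1) @ +oo --> 0 by rewrite -(mulr0 C); exact: cvgMr.
apply: (squeeze_cvgr _ (cvg_cst 0)); near=> s.
have s_ge1 : 1 <= s by near: s; apply: nbhs_pinfty_ge; rewrite num_real.
by rewrite gammaf_ge0 gammaf_le_inv.
Unshelve. all: by end_near.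
Qed.

Lemma integral_gammaf_head (r : R) : 0 <= r ->
  (\int[mu]_(s in `[0%R, (r + 1)%R]) ((r + 1) * gammaf r s)%R%:E =
   \int[mu]_(s in `[0%R, (r + 1)%R]) (gammaf (r + 1) s)%:E
   + (gammaf (r + 1) (r + 1))%:E)%E.
Proof.
move=> r_ge0; set c := r + 1; have c_gt0 : 0 < c by rewrite ltr_wpDl.
have cont_diff t : 0 < t -> {for t, continuous (fun s => c * gammaf r s - gammaf c s)}.
  move=> t_gt0; apply: continuousB; last exact: continuous_gammaf.
  by apply: continuousM; [exact: cst_continuous | exact: continuous_gammaf].
have ftc : (\int[mu]_(s in `[0%R, c]) (c * gammaf r s - gammaf c s)%:E =
    (gammaf c c)%:E - (gammaf c 0)%:E)%E.
  apply: continuous_FTC2 => //.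
  - apply/continuous_within_itvP => //; split.
    + by move=> t; rewrite in_itv /= => /andP[t_gt0 _]; exact: cont_diff.
    + apply: cvgB; last exact: gammaf_cvg0 (ltW c_gt0).
      by apply: cvgM; [exact: cvg_cst | exact: gammaf_cvg0].
    + exact/cvg_at_left_filter/cont_diff.
  - split.
    + by move=> t; rewrite in_itv /= => /andP[t_gt0 _]; case: (is_derive_gammaf r t_gt0).
    + exact: gammaf_cvg0 (ltW c_gt0).
    + exact/cvg_at_left_filter/continuous_gammaf.
  - move=> t; rewrite in_itv /= => /andP[t_gt0 _].
    by rewrite derive1E; have [_ ->] := is_derive_gammaf r t_gt0.
have gammaf_c0 : gammaf c 0 = 0 by rewrite /gammaf powR0 ?mul0r // gt_eqF.
rewrite (@ge0_integral_subr _ _ _ mu _ (fun s => c * gammaf r s) (gammaf c)) //.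
- by rewrite ftc gammaf_c0 sube0.
- by apply: measurable_funM; [exact: measurable_cst | exact: measurable_gammaf].
- exact: measurable_gammaf.
- by move=> s _; exact: gammaf_ge0.
- move=> s; rewrite /= in_itv /= => /andP[s_ge0 s_le_c].
  by rewrite gammaf_succ // ler_wpM2r ?gammaf_ge0.
Qed.

Lemma integral_gammaf_tail (r : R) : 0 <= r ->
  (\int[mu]_(s in `[(r + 1)%R, +oo[) (gammaf (r + 1) s)%:E =
   \int[mu]_(s in `[(r + 1)%R, +oo[) ((r + 1) * gammaf r s)%R%:E
   + (gammaf (r + 1) (r + 1))%:E)%E.
Proof.
move=> r_ge0; set c := r + 1; have c_gt0 : 0 < c by rewrite ltr_wpDl.
have cont_diff t : 0 < t -> {for t, continuous (fun s => gammaf c s - c * gammaf r s)}.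
  move=> t_gt0; apply: continuousB; first exact: continuous_gammaf.
  by apply: continuousM; [exact: cst_continuous | exact: continuous_gammaf].
have diff_ge0 s : c <= s -> 0 <= gammaf c s - c * gammaf r s.
  move=> c_le_s; have s_ge0 : 0 <= s := le_trans (ltW c_gt0) c_le_s.
  by rewrite gammaf_succ // -mulrBl mulr_ge0 ?subr_ge0 ?gammaf_ge0.
have ftc : (\int[mu]_(s in `[c, +oo[) (gammaf c s - c * gammaf r s)%:E =
    0%:E - (- gammaf c c)%:E)%E.
  apply: (@ge0_continuous_FTC2y R _ (fun s => - gammaf c s)) => //.
  - apply/continuous_within_itvcyP; split.
      by move=> t; rewrite in_itv /= => /andP[/(lt_trans c_gt0)/cont_diff].
    exact/cvg_at_right_filter/cont_diff.
  - by rewrite -oppr0; apply: cvgN; exact: gammaf_cvgy.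
  - by move=> t /(lt_trans c_gt0) t_gt0; case: (is_deriveN (is_derive_gammaf r t_gt0)).
  - exact/cvg_at_right_filter/continuousN/continuous_gammaf.
  - move=> t; rewrite in_itv /= => /andP[/(lt_trans c_gt0) t_gt0 _].
    by rewrite derive1E; have [_ ->] := is_deriveN (is_derive_gammaf r t_gt0); rewrite opprB.
rewrite (@ge0_integral_subr _ _ _ mu _ (gammaf c) (fun s => c * gammaf r s)) //.
- by rewrite ftc sub0e EFinN oppeK.
- exact: measurable_gammaf.
- by apply: measurable_funM; [exact: measurable_cst | exact: measurable_gammaf].
- by move=> s _; rewrite mulr_ge0 ?gammaf_ge0 ?ltW.
- by move=> s; rewrite /= in_itv /= andbT => /diff_ge0; rewrite subr_ge0.
Qed.

Lemma egammaD1 (r : R) : 0 <= r -> egamma (r + 1) = ((r + 1)%:E * egamma r)%E.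
Proof.
move=> r_ge0; have c_gt0 : 0 < r + 1 by rewrite ltr_wpDl.
have split_at_c r' := @ge0_integral_itvy_split R 0 (r + 1) (fun s => (gammaf r' s)%:E)
  c_gt0 ((measurable_EFinP _ _).2 (@measurable_gammaf r' _)) (fun s _ => gammaf_ge0 r' s).
have ge0_int (D : set R) : (0 <= \int[mu]_(s in D) (gammaf r s)%:E)%E.
  by apply: integral_ge0 => s _; rewrite lee_fin gammaf_ge0.
rewrite /egamma !split_at_c integral_gammaf_tail // ge0_muleDr //.
rewrite -!ge0_integralZl_EFin ?ltW //.
  by rewrite addeA addeAC -integral_gammaf_head.
all: by [move=> s _; exact: gammaf_ge0 | apply/measurable_EFinP; exact: measurable_gammaf].
Qed.

Lemma integral_gammaf0 (a : R) :
  (\int[mu]_(s in `[a, +oo[) (gammaf 0 s)%:E = (expR (- a))%:E)%E.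
Proof.
have -> : gammaf 0 = fun s => expR (- s) by apply/funext => s; rewrite /gammaf powRr0 mul1r.
have dexpN (t : R) : is_derive t 1 (fun s : R => - expR (- s)) (expR (- t)).
  have dexp : is_derive t 1 (fun s : R => expR (- s)) (expR (- t) * -1).
    exact: (is_derive1_comp (f := expR) (g := -%R)).
  by have := is_deriveN dexp; rewrite mulrN1 opprK.
rewrite (@ge0_continuous_FTC2y R _ (fun s => - expR (- s)) _ 0) ?sub0e ?EFinN ?oppeK //.
- by apply: continuous_subspaceT => t; exact: continuous_expRN.
- by move/cvgN: (@cvgr_expR R); rewrite oppr0.
- by apply: cvgN; apply: cvg_at_right_filter; exact: continuous_expRN.
- by move=> t _; rewrite derive1E; have [_ ->] := dexpN t.
Qed.

Lemma egamma0 : egamma 0 = 1%:E.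
Proof. by rewrite /egamma integral_gammaf0 oppr0 expR0. Qed.

Lemma egamma_ge0 r : (0 <= egamma r)%E.
Proof. by apply: integral_ge0 => s _; rewrite lee_fin gammaf_ge0. Qed.

Lemma egamma_nat m : egamma m%:R = (m`!)%:R%:E.
Proof.
elim: m => [|m IHm]; first by rewrite egamma0.
by rewrite -natr1 egammaD1 // IHm -EFinM factS natrM natr1 mulrC.
Qed.

Lemma powR_le1D (r s : R) m : 0 <= r -> r <= m%:R -> 0 <= s ->
  s `^ r <= 1 + s `^ m%:R.
Proof.
move=> r_ge0 r_le_m s_ge0; have [s_ge1|s_lt1] := leP 1 s.
  by apply: le_trans (ler_powR s_ge1 r_le_m) _; rewrite lerDr.
apply: (le_trans (y := 1)); last by rewrite lerDl powR_ge0.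
move: s_ge0; rewrite le_eqVlt => /predU1P[<-|s_gt0].
  by move: r_ge0; rewrite le_eqVlt => /predU1P[<-|r_gt0]; rewrite ?powRr0 ?powR0 ?gt_eqF.
by rewrite -[leRHS](powRr0 s) ger_powR // s_gt0 ltW.
Qed.

Lemma egamma_fin_num r : 0 <= r -> egamma r \is a fin_num.
Proof.
move=> r_ge0; have [m r_le_m] := exists_natr_ge r.
rewrite ge0_fin_numE ?egamma_ge0 //.
apply: (le_lt_trans (y := (egamma 0 + egamma m%:R)%E)); last first.
  by rewrite egamma0 egamma_nat -EFinD ltry.
rewrite /egamma -ge0_integralD //; last 4 first.
- by move=> s _; exact: gammaf_ge0.
- by apply/measurable_EFinP; exact: measurable_gammaf.
- by move=> s _; exact: gammaf_ge0.
- by apply/measurable_EFinP; exact: measurable_gammaf.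
apply: ge0_le_integral => //.
- by move=> s _; exact: gammaf_ge0.
- by apply/measurable_EFinP; exact: measurable_gammaf.
- by apply/measurable_EFinP/measurable_funD; exact: measurable_gammaf.
move=> s; rewrite /= in_itv /= andbT => s_ge0.
rewrite -EFinD lee_fin /gammaf powRr0 -mulrDl ler_wpM2r ?expR_ge0 //.
exact: powR_le1D.
Qed.

Lemma egamma_gt0 r : 0 <= r -> (0 < egamma r)%E.
Proof.
move=> r_ge0; apply: (lt_le_trans (y := (expR (-1))%:E)); first by rewrite lte_fin expR_gt0.
rewrite -integral_gammaf0; apply: (le_trans (y := (\int[mu]_(s in `[1%R, +oo[) (gammaf r s)%:E)%E)).
  apply: ge0_le_integral => //.
  - by move=> s _; exact: gammaf_ge0.
  - by apply/measurable_EFinP; exact: measurable_gammaf.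
  - by apply/measurable_EFinP; exact: measurable_gammaf.
  move=> s; rewrite /= in_itv /= andbT => s_ge1.
  by rewrite lee_fin /gammaf ler_wpM2r ?expR_ge0 // powRr0 -(powRr0 s) ler_powR.
apply: ge0_subset_integral => //.
- by apply/measurable_EFinP; exact: measurable_gammaf.
- by move=> s _; exact: gammaf_ge0.
- by apply: subset_itvr; rewrite bnd_simp.
Qed.

Lemma Gamma1 : Gamma (1 : R) = 1.
Proof. by rewrite GammaE subrr egamma0. Qed.

Lemma GammaD1 (x : R) : 1 <= x -> Gamma (x + 1) = x * Gamma x.
Proof.
move=> x_ge1; have x1_ge0 : 0 <= x - 1 by rewrite subr_ge0.
by rewrite !GammaE addrK -{1}(subrK 1 x) egammaD1 // subrK fineM // egamma_fin_num.
Qed.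

Lemma Gamma_neq0 (x : R) : 1 <= x -> Gamma x != 0.
Proof.
move=> x_ge1; have x1_ge0 : 0 <= x - 1 by rewrite subr_ge0.
by rewrite GammaE gt_eqF // fine_gt0 // egamma_gt0 //= -ge0_fin_numE ?egamma_ge0 ?egamma_fin_num.
Qed.

End GammaFunction.

Lemma a_coef_at1 (R : realType) (p : R) i : 0 <= p -> a_coef p i.+1 1 = 1.
Proof.
move=> p_ge0; have ge1 : 1 <= 1 + i.+1%:R * p by rewrite lerDl mulr_ge0.
by rewrite /a_coef Gamma1 mul1r divff // Gamma_neq0.
Qed.

Lemma a_coefS (R : realType) (p : R) i n : 0 <= p -> (0 < n)%N ->
  a_coef p i n.+1 = (1 + i%:R * p / n%:R) * a_coef p i n.
Proof.
move=> p_ge0 n_gt0; have n_ge1 : 1 <= n%:R :> R by rewrite ler1n.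
have ge1 : 1 <= n%:R + i%:R * p by rewrite (le_trans n_ge1) // lerDl mulr_ge0.
have n_neq0 : n%:R != 0 :> R by rewrite pnatr_eq0 -lt0n.
rewrite /a_coef -natr1 addrAC !GammaD1 //.
by field; rewrite n_neq0 !Gamma_neq0 // lerDl mulr_ge0.
Qed.

(* The identity holds for every p >= 0; p < 1 only makes the walk a
   probabilistic model. *)
Theorem theorem2p1 (R : realType) (p : R) (hp0 : 0 < p) (hp1 : p < 1)
    (k n : nat) (hk : (0 < k)%N) (hn : (0 < n)%N) :
  lerw_E p n (fun xs => falling (H_of xs)%:R k) =
  (k`!)%:R * \sum_(1 <= i < k.+1)
      (-1) ^+ (k - i) * ('C(k.-1, i.-1))%:R * a_coef p i n.
Proof.
case: k hk => [//|k] _; have p_ge0 := ltW hp0.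
apply: (falling_moment_eq_formula (a := a_coef p)) hn => [i | i m m_gt0].
  exact: a_coef_at1.
exact: a_coefS.
Qed.
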